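(* Let $i$ be a positive integer. Then $\mathcal P_i(s)$ is a nonzero polynomial of degree at most $3i-3$, and $\mathcal Q_i(s)$ is a nonzero polynomial of degree $3i-2$.
   Context: Let $\mathbb F$ be a field of characteristic different from $3$ containing a primitive cube root of unity $\zeta_3$. For $i\in\mathbb Z$ define the rational functions in $\mathbb F(s)$ $$\mathcal P_i(s)=\frac{(s+\zeta_3)^{3i}-(s+\zeta_3^2)^{3i}}{3(\zeta_3-\zeta_3^2)s(s-1)},\qquad \mathcal Q_i(s)=\frac{\frac{1-\zeta_3}{3}(s+\zeta_3)^{3i-1}+\frac{1-\zeta_3^2}{3}(s+\zeta_3^2)^{3i-1}}{s-1}.$$ *)

From HB Require Import structures.
From mathcomp Require Import all_boot all_order all_algebra.
Set Implicit Arguments. Unset Strict Implicit. Unset Printing Implicit Defensive.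
Import Order.TTheory GRing.Theory Num.Theory.
Local Open Scope ring_scope.

(* Rational functions F(s) are modelled as {fraction {poly F}}; the variable s
   is the image of 'X. Integer powers use exprz (x ^ (k : int)). *)
Definition polyF (F : fieldType) (p : {poly F}) : {fraction {poly F}} :=
  tofrac p.

Definition calP (F : fieldType) (z : F) (i : int) : {fraction {poly F}} :=
  (polyF ('X + z%:P) ^ (3 * i) - polyF ('X + (z ^+ 2)%:P) ^ (3 * i))
  / polyF ((3 * (z - z ^+ 2))%:P * 'X * ('X - 1)).

Definition calQ (F : fieldType) (z : F) (i : int) : {fraction {poly F}} :=
  (polyF (((1 - z) / 3)%:P) * polyF ('X + z%:P) ^ (3 * i - 1)
   + polyF (((1 - z ^+ 2) / 3)%:P) * polyF ('X + (z ^+ 2)%:P) ^ (3 * i - 1))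
  / polyF ('X - 1).

From HB Require Import structures.
From mathcomp Require Import all_boot all_order all_algebra ring zify.
Set Implicit Arguments. Unset Strict Implicit. Unset Printing Implicit Defensive.
Import Order.TTheory GRing.Theory Num.Theory.
Local Open Scope ring_scope.

(* Since z^3 = 1 and 1 + z + z^2 = 0, we have 1 + z = -z^2 and 1 + z^2 = -z.
   The numerator (s+z)^(3i) - (s+z^2)^(3i) of P_i has degree < 3i (the leading
   terms cancel), does not vanish at s = -z, and vanishes at s = 0 and s = 1;
   so the denominator 3(z - z^2)s(s-1) divides it.  The numerator of Q_i is an
   affine combination (the weights (1-z)/3 and (1-z^2)/3 sum to 1) of two monic
   polynomials of degree 3i-1, hence has degree exactly 3i-1, and at s = 1 it
   equals +-(z(1-z) + z^2(1-z^2))/3 = 0, so s - 1 divides it. *)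

Lemma size_XaddC_exp (R : nzRingType) (c : R) n : size (('X + c%:P) ^+ n) = n.+1.
Proof. by rewrite -[c]opprK polyCN size_exp_XsubC. Qed.

Lemma size_sub_monic_lt (R : nzRingType) (p q : {poly R}) :
  p \is monic -> q \is monic -> size p = size q -> (size (p - q)%R < size p)%N.
Proof.
move=> mon_p mon_q eq_pq.
have p_gt0 : (0 < size p)%N by rewrite size_poly_gt0 monic_neq0.
rewrite -(prednK p_gt0) ltnS; apply/leq_sizeP => j le_j.
rewrite coefB; have [->|ne_j] := eqVneq j (size p).-1.
  by rewrite -lead_coefE eq_pq -lead_coefE (monicP mon_p) (monicP mon_q) subrr.
have lt_j : (size p <= j)%N by rewrite -(prednK p_gt0) ltn_neqAle eq_sym ne_j.
by rewrite !nth_default ?subrr -?eq_pq.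
Qed.

Lemma size_XaddC_exp_sub_leq (R : nzRingType) (a b : R) n :
  (size (('X + a%:P) ^+ n - ('X + b%:P) ^+ n)%R <= n)%N.
Proof.
by rewrite -ltnS -(size_XaddC_exp a n) size_sub_monic_lt ?monic_exp ?monicXaddC
  ?size_XaddC_exp.
Qed.

Lemma XaddC_exp_sub_neq0 (R : idomainType) (a b : R) n :
  a != b -> (0 < n)%N -> ('X + a%:P) ^+ n - ('X + b%:P) ^+ n != 0.
Proof.
move=> neq_ab n_gt0; apply/eqP => /(congr1 (horner^~ (- a))).
rewrite !hornerE addNr expr0n gtn_eqF //= sub0r => /eqP.
by rewrite oppr_eq0 expf_eq0 n_gt0 addrC subr_eq0 eq_sym (negbTE neq_ab).
Qed.

Lemma size_affine_monic (R : nzRingType) (a b : R) (p q : {poly R}) :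
  p \is monic -> q \is monic -> size p = size q -> a + b = 1 ->
  size (a *: p + b *: q) = size p.
Proof.
move=> mon_p mon_q eq_pq ab1.
have -> : a *: p + b *: q = p + b *: (q - p).
  have -> : a = 1 - b by rewrite -ab1 addrK.
  by rewrite scalerBl scale1r scalerBr addrA addrAC.
apply: size_polyDl; apply: leq_ltn_trans (size_scale_leq _ _) _.
by rewrite -size_polyN opprB size_sub_monic_lt.
Qed.

Lemma tofrac_divp (F : fieldType) (p d : {poly F}) :
  d %| p -> tofrac p / tofrac d = tofrac (p %/ d).
Proof.
have [-> /dvd0pP -> | d_neq0 /divpK {1}<-] := eqVneq d 0.
  by rewrite div0p tofrac0 mul0r.
by rewrite tofracM mulfK // tofrac_eq0.
Qed.

Section PrimitiveCubeRoot.

Variables (R : idomainType) (z : R).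
Hypothesis prim_z : 3.-primitive_root z.

Lemma prim3_expr3M k : z ^+ (3 * k) = 1.
Proof. by rewrite exprM (prim_expr_order prim_z) expr1n. Qed.

Lemma prim3_sqr_neq : z ^+ 2 != z.
Proof. by rewrite -[X in _ != X]expr1 (eq_prim_root_expr prim_z). Qed.

Lemma prim3_sum : z ^+ 2 + z + 1 = 0.
Proof.
have z_neq1 : z != 1.
  by rewrite -[X in _ != X](expr0 z) -[X in X != _]expr1 (eq_prim_root_expr prim_z).
have : (z - 1) * (z ^+ 2 + z + 1) = z ^+ 3 - 1 by ring.
rewrite (prim_expr_order prim_z) subrr => /eqP.
by rewrite mulf_eq0 subr_eq0 (negbTE z_neq1) => /eqP.
Qed.

Lemma prim3_add1z : 1 + z = - z ^+ 2.
Proof. by apply/eqP; rewrite -subr_eq0 -prim3_sum; apply/eqP; ring. Qed.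

Lemma prim3_add1z2 : 1 + z ^+ 2 = - z.
Proof. by apply/eqP; rewrite -subr_eq0 -prim3_sum; apply/eqP; ring. Qed.

End PrimitiveCubeRoot.

Section CubeRootNumerators.

Variables (F : fieldType) (z : F).

Definition calP_num n : {poly F} :=
  ('X + z%:P) ^+ n - ('X + (z ^+ 2)%:P) ^+ n.

Definition calQ_num m : {poly F} :=
  ((1 - z) / 3) *: ('X + z%:P) ^+ m
  + ((1 - z ^+ 2) / 3) *: ('X + (z ^+ 2)%:P) ^+ m.

Lemma calPE k :
  calP z k%:Z =
    tofrac (calP_num (3 * k)) / tofrac ((3 * (z - z ^+ 2)) *: ('X * ('X - 1%:P))).
Proof.
by rewrite /calP /polyF polyC1 -mul_polyC mulrA -PoszM -!exprnP -!tofracXn -tofracB.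
Qed.

Lemma calQE k :
  calQ z k.+1%:Z = tofrac (calQ_num (3 * k + 2)) / tofrac ('X - 1%:P).
Proof.
rewrite /calQ /polyF.
have -> : 3 * k.+1%:Z - 1 = (3 * k + 2)%N by lia.
by rewrite polyC1 -!exprnP -!tofracXn -!tofracM -tofracD !mul_polyC.
Qed.

Hypothesis prim_z : 3.-primitive_root z.

Lemma calP_num_neq0 n : (0 < n)%N -> calP_num n != 0.
Proof. by apply: XaddC_exp_sub_neq0; rewrite eq_sym (prim3_sqr_neq prim_z). Qed.

Lemma root_calP_num0 k : root (calP_num (3 * k)) 0.
Proof.
by rewrite /root /calP_num !hornerE exprAC (prim3_expr3M prim_z) expr1n subrr.
Qed.

Lemma root_calP_num1 k : root (calP_num (3 * k)) 1.
Proof.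
rewrite /root /calP_num !hornerE (prim3_add1z prim_z) (prim3_add1z2 prim_z).
by rewrite (exprNn z) (exprNn (z ^+ 2)) exprAC (prim3_expr3M prim_z) expr1n subrr.
Qed.

Lemma dvdp_calP_num k : 'X * ('X - 1%:P) %| calP_num (3 * k).
Proof.
rewrite Gauss_dvdp; last first.
  by rewrite coprimep_sym coprimepX rootE !hornerE oppr_eq0 oner_eq0.
have := dvdp_XsubCl (calP_num (3 * k)) 0; rewrite polyC0 subr0 => ->.
by rewrite dvdp_XsubCl root_calP_num0 root_calP_num1.
Qed.

Lemma root_calQ_num1 k : root (calQ_num (3 * k + 2)) 1.
Proof.
rewrite /root /calQ_num !hornerE (prim3_add1z prim_z) (prim3_add1z2 prim_z).
rewrite (exprNn z) (exprNn (z ^+ 2)) -exprM.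
rewrite (_ : 2 * (3 * k + 2) = 3 * (2 * k + 1) + 1)%N; last by lia.
rewrite (exprD z (3 * k)) (exprD z (3 * (2 * k + 1))) !(prim3_expr3M prim_z).
rewrite !mul1r expr1; apply/eqP.
transitivity ((-1) ^+ (3 * k + 2) / 3 * z * (1 - z ^+ 3)); first by ring.
by rewrite (prim_expr_order prim_z) subrr mulr0.
Qed.

Hypothesis three_neq0 : (3 : F) != 0.

Lemma size_calQ_num m : size (calQ_num m) = m.+1.
Proof.
rewrite size_affine_monic ?size_XaddC_exp ?monic_exp ?monicXaddC //.
rewrite -mulrDl -[RHS](divff three_neq0); congr (_ / _).
have -> : 1 - z + (1 - z ^+ 2) = 3 - (z ^+ 2 + z + 1) by ring.
by rewrite (prim3_sum prim_z) subr0.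
Qed.

End CubeRootNumerators.

Theorem lemma3p3 (F : fieldType) (z : F)
  (hchar : (3%N \notin [pchar F])) (hz : 3.-primitive_root z)
  (i : nat) (hi : (0 < i)%N) :
  (exists p : {poly F},
     [/\ p != 0, ((size p).-1 <= 3 * i - 3)%N & calP z i%:Z = polyF p]) /\
  (exists q : {poly F},
     [/\ q != 0, (size q).-1 = (3 * i - 2)%N & calQ z i%:Z = polyF q]).
Proof.
have three_neq0 : (3 : F) != 0 by move: hchar; rewrite inE.
case: i hi => // k _; split.
- set A := calP_num z (3 * k.+1); set c := 3 * (z - z ^+ 2).
  have c_neq0 : c != 0 by rewrite mulf_neq0 // subr_eq0 eq_sym (prim3_sqr_neq hz).
  set D := c *: ('X * ('X - 1%:P)).
  have D_dvd_A : D %| A by rewrite dvdpZl // dvdp_calP_num.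
  have size_D : size D = 3%N.
    by rewrite size_scale // size_mul ?polyX_eq0 ?polyXsubC_eq0 // size_polyX size_XsubC.
  have D_neq0 : D != 0 by rewrite -size_poly_eq0 size_D.
  exists (A %/ D); split; last by rewrite calPE tofrac_divp.
  + apply: contra_neq (calP_num_neq0 hz (ltn0Sn _) : A != 0) => qD0.
    by rewrite -(divpK D_dvd_A) qD0 mul0r.
  + have : (size A <= 3 * k.+1)%N := size_XaddC_exp_sub_leq _ _ _.
    by rewrite size_divp // size_D; case: (size A); lia.
- set B := calQ_num z (3 * k + 2).
  have X1_dvd_B : 'X - 1%:P %| B by rewrite dvdp_XsubCl root_calQ_num1.
  have size_quo : size (B %/ ('X - 1%:P)) = (3 * k + 2)%N.
    by rewrite size_divp ?polyXsubC_eq0 // size_XsubC size_calQ_num // subn1.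
  exists (B %/ ('X - 1%:P)); split; last by rewrite calQE tofrac_divp.
  + by rewrite -size_poly_eq0 size_quo addn2.
  + by rewrite size_quo; lia.
Qed.
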